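(* Consider a CoMP BC under the finite-field model over $\mathbb F_q$ with connectivity matrix $\mathbf M\in\{0,*\}^{K\times B}$. Then for every prime power $q$, $C_\Sigma^{\mathrm{NS}}(q)\ge \operatorname{tri}(\mathbf M)\log_2 q$, and $d_\Sigma^{\mathrm{NS}}\ge\operatorname{tri}(\mathbf M)$.
   Context: CoMP BC, finite-field model: $B$ transmit antennas, $K$ receivers, connectivity $\mathbf M\in\{0,*\}^{K\times B}$. At use $\tau$ the transmitter sends $X^{(\tau)}\in\mathbb F_q^B$ and Rx-$k$ observes $(Y_k^{(\tau)},(G_{kj}^{(\tau)})_j)$, $Y_k^{(\tau)}=\sum_jG_{kj}^{(\tau)}X_j^{(\tau)}$; coefficients mutually independent over $k,j,\tau$ and of the messages, uniform on $\mathbb F_q^\times$ if $M_{kj}=*$, else $0$. Messages $W_k$ independent, uniform on finite $\mathcal M_k$. A $\kappa$-partite NS box is a conditional pmf of outputs given inputs (finite output alphabets) whose output marginals for any subset of parties depend only on those parties' inputs. An NS-assisted scheme is a $(K+1)$-partite NS box where the transmitter inputs $(W_1,\dots,W_K)$ and obtains the channel input sequence, and Rx-$k$ inputs its channel output sequence and obtains $\hat W_k$; joint law = uniform message pmf $\times$ box $\times$ channel. Rates are achievable if some sequence of schemes has vanishing $\max_k\Pr(\hat W_k\ne W_k)$ and $\lim\frac1n\log_2|\mathcal M_k|\ge R_k$; $C_\Sigma^{\mathrm{NS}}(q)$ is the maximal sum rate over the closure. A DoF tuple is achievable if for each prime power $q$ some NS-achievable rate tuple has $\lim_q R_k(q)/\log_2q\ge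 d_k$; $d_\Sigma^{\mathrm{NS}}$ is the maximal sum over the closure. $\mathbf M$ contains a $D$-triangular matrix if after permuting rows and columns it has a $D\times D$ submatrix that is lower triangular with all diagonal entries $*$; $\operatorname{tri}(\mathbf M)$ is the largest such $D$. *)

From HB Require Import structures.
From mathcomp Require Import all_boot all_order all_algebra.
From mathcomp Require Import all_classical all_reals all_analysis.

Set Implicit Arguments.
Unset Strict Implicit.
Unset Printing Implicit Defensive.

Import Order.TTheory GRing.Theory Num.Theory.
Local Open Scope ring_scope.

(* Connectivity matrix  M : 'M[bool]_(K,B),  M k j = true  <->  M_kj = * *)

Definition has_tri (K B : nat) (M : 'M[bool]_(K, B)) (D : nat) : bool :=
  [exists r : {ffun 'I_D -> 'I_K}, exists c : {ffun 'I_D -> 'I_B},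
    [&& injectiveb r, injectiveb c,
        [forall i : 'I_D, M (r i) (c i)] &
        [forall i : 'I_D, forall j : 'I_D, (i < j)%N ==> ~~ M (r i) (c j)]]].

(* tri(M): the largest such D (D <= K by injectivity of the row choice;
   D = 0 always qualifies). *)
Definition tri (K B : nat) (M : 'M[bool]_(K, B)) : nat :=
  \max_(D < K.+1 | has_tri M D) (D : nat).

Section Model.
Variable R : realType.

Definition log2 (x : R) : R := ln x / ln 2.

(* closure in R^K (sup-norm, equivalently Euclidean) *)
Definition closureK (K : nat) (A : ('I_K -> R) -> Prop) (r : 'I_K -> R) : Prop :=
  forall eps : R, 0 < eps ->
    exists r', A r' /\ forall k, `|r k - r' k| < eps.

Variable F : finFieldType.
Variables K B : nat.
Variable M : 'M[bool]_(K, B).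

(* message tuples: W_k ranges over M_k = 'I_(m k).+1, |M_k| = (m k).+1 *)
Definition msgs (m : 'I_K -> nat) := {dffun forall k : 'I_K, 'I_(m k).+1}.
Definition chin (n : nat) := {ffun 'I_n -> 'rV[F]_B}.
(* channel output sequence of one receiver: (Y_k^(tau), (G_kj^(tau))_j) *)
Definition rxobs (n : nat) := {ffun 'I_n -> (F * 'rV[F]_B)%type}.
Definition coefs (n : nat) := {ffun 'I_n -> 'M[F]_(K, B)}.

Definition pcoef (b : bool) (a : F) : R :=
  if b then (if a != 0 then (#|F| - 1)%:R^-1 else 0) else (a == 0)%:R.

Definition PG (n : nat) (g : coefs n) : R :=
  \prod_(t < n) \prod_(k < K) \prod_(j < B) pcoef (M k j) (g t k j).

Definition obs (n : nat) (x : chin n) (g : coefs n) : {ffun 'I_K -> rxobs n} :=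
  [ffun k => [ffun t => (\sum_(j < B) g t k j * x t 0 j, row k (g t))]].

(* An NS-assisted scheme of block length n with message sets M_k = 'I_(m k).+1:
   a (K+1)-partite box  P w o x wh = P(x, wh_1..wh_K | w, o_1..o_K),
   transmitter: input w (all messages), output x (channel input sequence);
   Rx-k: input o k (its channel output sequence), output wh k. *)
Definition box (n : nat) (m : 'I_K -> nat) :=
  msgs m -> {ffun 'I_K -> rxobs n} -> chin n -> msgs m -> R.

(* parties: None = transmitter, Some k = Rx-k *)
Definition NS_box (n : nat) (m : 'I_K -> nat) (P : box n m) : Prop :=
  (forall (w : msgs m) (o : {ffun 'I_K -> rxobs n}) (x : chin n) (wh : msgs m), 0 <= P w o x wh) /\
  (forall (w : msgs m) (o : {ffun 'I_K -> rxobs n}), \sum_(x : chin n) \sum_(wh : msgs m) P w o x wh = 1) /\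
  (* no-signalling: for every subset S of parties, the marginal of the
     outputs of S depends only on the inputs of S *)
  (forall (S : {set option 'I_K}) (w : msgs m) (o : {ffun 'I_K -> rxobs n})
     (w' : msgs m) (o' : {ffun 'I_K -> rxobs n}),
     (None \in S -> w = w') ->
     (forall k, Some k \in S -> o k = o' k) ->
     forall (x : chin n) (wh : msgs m),
       \sum_(x' : chin n | (None \in S) ==> (x' == x))
         \sum_(wh' : msgs m | [forall k, (Some k \in S) ==> (wh' k == wh k)])
            P w o x' wh'
       = \sum_(x' : chin n | (None \in S) ==> (x' == x))
         \sum_(wh' : msgs m | [forall k, (Some k \in S) ==> (wh' k == wh k)])
            P w' o' x' wh').

(* Pr(What_k <> W_k) under the joint law
   uniform message pmf x box x channel (coefficients marginalized) *)
Definition err (n : nat) (m : 'I_K -> nat) (P : box n m) (k : 'I_K) : R :=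
  \sum_(w : msgs m) \sum_(g : coefs n) \sum_(x : chin n) \sum_(wh : msgs m)
     (#|{: msgs m}|%:R)^-1 * PG g * P w (obs x g) x wh * (wh k != w k)%:R.

(* NS-achievable rate tuples (bits per channel use): a sequence of schemes
   (indexed by N, block length nl N >= 1) with vanishing max_k error and
   liminf_N (1/nl N) log2 |M_k| >= r_k. *)
Definition NS_achievable (r : 'I_K -> R) : Prop :=
  exists (nl : nat -> nat) (m : nat -> 'I_K -> nat)
         (P : forall N, box (nl N) (m N)),
    (forall N, (0 < nl N)%N) /\
    (forall N, NS_box (P N)) /\
    (forall eps : R, 0 < eps -> exists N0, forall N, (N0 <= N)%N ->
        forall k, err (P N) k <= eps) /\
    (forall eps : R, 0 < eps -> exists N0, forall N, (N0 <= N)%N ->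
        forall k, r k - eps <= log2 (m N k).+1%:R / (nl N)%:R).

Definition CSigma_NS : \bar R :=
  ereal_sup [set (\sum_(k < K) r k)%:E | r in closureK NS_achievable].

End Model.

Arguments CSigma_NS : clear implicits.
Arguments NS_achievable : clear implicits.

(* DoF: for each finite field F (of size q) an NS-achievable rate tuple
   Rt F with liminf_{q -> oo} Rt F k / log2 q >= d k. *)
Definition DoF_achievable (R : realType) (K B : nat) (M : 'M[bool]_(K, B))
    (d : 'I_K -> R) : Prop :=
  exists Rt : forall F : finFieldType, 'I_K -> R,
    (forall F : finFieldType, NS_achievable R F K B M (Rt F)) /\
    (forall k (eps : R), 0 < eps -> exists Q : nat,
       forall F : finFieldType, (Q <= #|F|)%N ->
         d k - eps <= Rt F k / log2 (#|F|%:R : R)).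

Definition dSigma_NS (R : realType) (K B : nat) (M : 'M[bool]_(K, B)) : \bar R :=
  ereal_sup [set (\sum_(k < K) d k)%:E | d in closureK (DoF_achievable M)].

From HB Require Import structures.
From mathcomp Require Import all_boot all_order all_algebra.
From mathcomp Require Import all_classical all_reals all_analysis.
Import Order.TTheory GRing.Theory Num.Theory.
Local Open Scope ring_scope.
Set Implicit Arguments.
Unset Strict Implicit.
Unset Printing Implicit Defensive.

(* Fix a triangular D x D submatrix with rows r_i and columns c_i.  In one
   channel use, Rx-r_i gets a message in F (rate log2 q) and all other
   receivers a trivial one.  The box draws a uniform key u in F^D, hands the
   transmitter X with X_(c_i) = u_i (other antennas silent), and hands Rx-r_i
   the value w_i - u_i + s_i, where s_i = (Y - sum_(i' < i) G_(c_i') u_i') / G_(c_i)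
   is the successive interference cancellation estimate computed from the
   receiver's own input.  On the true channel output, triangularity gives
   s_i = u_i, so Rx-r_i reads w_i without error.  The box is no-signalling:
   for fixed inputs the receivers' outputs are a triangular, hence bijective,
   function of u, so they are jointly uniform whatever the inputs; and each
   output depends only on w and the input of its own party. *)

Lemma big_inj_supp {R : Type} {idx : R} {op : Monoid.com_law idx} {I J : finType}
    (h : I -> J) (f : J -> R) :
  injective h -> (forall j, j \notin codom h -> f j = idx) ->
  \big[op/idx]_j f j = \big[op/idx]_i f (h i).
Proof.
move=> h_inj f_supp.
rewrite (bigID (mem (codom h))) /= [X in op _ X]big1 ?Monoid.mulm1; last first.
  by move=> j /f_supp.
by rewrite -big_uniq ?big_image // map_inj_uniq // enum_uniq.
Qed.

Lemma sumr_pred1_mul (R : nzSemiRingType) (I : finType) (P : pred I) (a : I)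
    (f : I -> R) :
  \sum_(i | P i) (i == a)%:R * f i = (P a)%:R * f a.
Proof.
rewrite big_mkcond (bigD1 a) //= big1 ?addr0.
  by case: (P a); rewrite ?eqxx ?mul1r ?mul0r.
by move=> i /negbTE ->; case: (P i); rewrite ?mul0r.
Qed.

Lemma closureK_sub (R : realType) (K : nat) (A : ('I_K -> R) -> Prop) (r : 'I_K -> R) :
  A r -> closureK A r.
Proof. by move=> Ar eps eps_gt0; exists r; split=> // k; rewrite subrr normr0. Qed.

Lemma log2_card_gt0 (R : realType) (F : finFieldType) : 0 < log2 (#|F|%:R : R).
Proof. by rewrite /log2 divr_gt0 ?ln_gt0 ?ltr1n // card_finNzRing_gt1. Qed.

Lemma pcoef_false_neq0 (R : realType) (F : finFieldType) (a : F) :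
  pcoef R false a != 0 -> a = 0.
Proof. by rewrite /pcoef pnatr_eq0 eqb0 negbK => /eqP. Qed.

Lemma pcoef_true_neq0 (R : realType) (F : finFieldType) (a : F) :
  pcoef R true a != 0 -> a != 0.
Proof. by rewrite /pcoef; case: (a != 0); rewrite ?eqxx. Qed.

Lemma PG_neq0_pcoef (R : realType) (F : finFieldType) (K B n : nat)
    (M : 'M[bool]_(K, B)) (g : coefs F K B n) t k j :
  PG R M g != 0 -> pcoef R (M k j) (g t k j) != 0.
Proof.
apply: contraNneq => g_tkj0.
by rewrite /PG (bigD1 t) //= (bigD1 k) //= (bigD1 j) //= g_tkj0 !mul0r.
Qed.

Lemma has_tri_tri (K B : nat) (M : 'M[bool]_(K, B)) : has_tri M (tri M).
Proof.
have has_tri0 : has_tri M (@ord0 K).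
  have from0 (T : Type) : 'I_0 -> T by case.
  apply/existsP; exists [ffun i => from0 _ i]; apply/existsP; exists [ffun i => from0 _ i].
  by apply/and4P; split; try (by apply/injectiveP => -[]); apply/forallP => -[].
by rewrite /tri (bigop.bigmax_eq_arg ord0) //; case: arg_maxnP.
Qed.

Section TriangularScheme.

Variables (R : realType) (F : finFieldType) (K B D : nat) (M : 'M[bool]_(K, B)).
Variables (r : 'I_D -> 'I_K) (c : 'I_D -> 'I_B).
Hypotheses (r_inj : injective r) (c_inj : injective c).
Hypothesis diag_tri : forall i, M (r i) (c i).
Hypothesis upper_tri : forall i j : 'I_D, (i < j)%N -> ~~ M (r i) (c j).

Definition served (k : 'I_K) : bool := [exists i, r i == k].

Definition msg_max (k : 'I_K) : nat := if served k then #|F|.-1 else 0%N.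

Definition key := {ffun 'I_D -> F}.

Definition field_of_nat (n : nat) : F := nth 0 (enum F) n.

Definition tx_input (u : key) : chin F B 1 :=
  [ffun=> \row_j (if [pick i | c i == j] is Some i then u i else 0)].

Definition sic (o : rxobs F B 1) (i : 'I_D) (u : key) : F :=
  ((o ord0).1 - \sum_(i' < D | (i' < i)%N) (o ord0).2 0 (c i') * u i')
    / (o ord0).2 0 (c i).

Definition masked_msgs (w : msgs msg_max) (o : {ffun 'I_K -> rxobs F B 1}) (u : key) : key :=
  [ffun i => field_of_nat (w (r i)) - u i + sic (o (r i)) i u].

Definition decode_msg (k : 'I_K) (z : key) : 'I_(msg_max k).+1 :=
  if [pick i | r i == k] is Some i then inord (index (z i) (enum F)) else ord0.

Definition rx_output (w : msgs msg_max) (o : {ffun 'I_K -> rxobs F B 1}) (u : key) :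
    msgs msg_max :=
  @finfun _ (fun k => 'I_(msg_max k).+1) (fun k => decode_msg k (masked_msgs w o u)).

Definition scheme_box : box R F B 1 msg_max := fun w o x wh =>
  \sum_(u : key) #|{: key}|%:R^-1 * ((x == tx_input u) && (wh == rx_output w o u))%:R.

Lemma masked_msgs_inj w o : injective (masked_msgs w o).
Proof.
move=> u u' eq_z; apply/ffunP.
suff eq_lt n (i : 'I_D) : (i < n)%N -> u i = u' i by move=> i; apply: (eq_lt D).
elim: n i => [|n IHn] i //; rewrite ltnS leq_eqVlt => /orP[/eqP def_i|/IHn //].
have := congr1 (fun z : key => z i) eq_z; rewrite /= !ffunE.
have -> : sic (o (r i)) i u = sic (o (r i)) i u'.
  by rewrite /sic; congr ((_ - _) / _); apply: eq_bigr => i' lt_i'i; rewrite IHn // -def_i.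
by move/addIr/addrI/oppr_inj.
Qed.

Lemma scheme_box_marginal (Px : pred (chin F B 1)) (Pw : pred (msgs msg_max)) w o :
  \sum_(x | Px x) \sum_(wh | Pw wh) scheme_box w o x wh =
  \sum_u (Px (tx_input u))%:R * ((Pw (rx_output w o u))%:R * #|{: key}|%:R^-1).
Proof.
rewrite /scheme_box; under eq_bigr do rewrite exchange_big /=.
rewrite exchange_big /=; apply: eq_bigr => u _.
under eq_bigr do under eq_bigr do rewrite -mulnb natrM mulrCA.
under eq_bigr do rewrite -mulr_sumr.
rewrite sumr_pred1_mul; congr (_ * _).
by under eq_bigr do rewrite mulrC; rewrite sumr_pred1_mul.
Qed.

Lemma rx_output_local w (o o' : {ffun 'I_K -> rxobs F B 1}) u k :
  o k = o' k -> rx_output w o u k = rx_output w o' u k.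
Proof.
move=> eq_ok; rewrite !ffunE /decode_msg; case: pickP => // i /eqP rik.
by rewrite !ffunE rik eq_ok.
Qed.

Lemma scheme_box_NS : NS_box scheme_box.
Proof.
have card_key_neq0 : #|{: key}|%:R != 0 :> R.
  by rewrite pnatr_eq0 -lt0n; apply/card_gt0P; exists [ffun=> 0].
split; [|split].
- move=> w o x wh; apply: sumr_ge0 => u _.
  by apply: mulr_ge0; rewrite ?invr_ge0 ler0n.
- move=> w o; rewrite (scheme_box_marginal predT predT).
  under eq_bigr do rewrite !mul1r.
  by rewrite sumr_const -[#|xpredT|]/#|{: key}| -(mulr_natr (_^-1)) mulVf.
move=> S w o w' o' eq_w eq_o x wh; rewrite !scheme_box_marginal.
have [tx_in_S|_] := boolP (None \in S).
  rewrite -(eq_w tx_in_S); apply: eq_bigr => u _; congr (_ * ((nat_of_bool _)%:R * _)).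
  apply/eq_forallb => k; have [/eq_o eq_ok|] //= := boolP (Some k \in S).
  by rewrite (rx_output_local _ _ eq_ok).
(* Without the transmitter, reindexing along the bijection [masked_msgs]
   removes all dependence on the inputs. *)
pose outS z := [forall k, (Some k \in S) ==> (decode_msg k z == wh k)].
have uniform w0 o0 :
    \sum_u (false ==> (tx_input u == x))%:R *
      ([forall k, (Some k \in S) ==> (rx_output w0 o0 u k == wh k)]%:R
       * #|{: key}|%:R^-1)
    = \sum_z (outS z)%:R * (#|{: key}|%:R : R)^-1.
  rewrite [RHS](reindex_inj (@masked_msgs_inj w0 o0)) /=.
  apply: eq_bigr => u _; rewrite mul1r; congr ((nat_of_bool _)%:R * _).
  by apply: eq_forallb => k; rewrite ffunE.
by rewrite !uniform.
Qed.

Lemma sic_obs (g : coefs F K B 1) u i :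
  PG R M g != 0 -> sic (obs (tx_input u) g (r i)) i u = u i.
Proof.
move=> g_supp; rewrite /sic /obs !ffunE /= mxE.
under eq_bigr do rewrite mxE.
under [X in _ - X]eq_bigr do rewrite mxE.
rewrite (big_inj_supp (h := c)) //; last first.
  move=> j j_notin_c; case: pickP => [i' /eqP ci'j|]; last by rewrite mulr0.
  by move: j_notin_c; rewrite -ci'j codom_f.
have tx_c i' : (if [pick i0 | c i0 == c i'] is Some i0 then u i0 else 0) = u i'.
  by case: pickP => [i0 /eqP /c_inj -> //|/(_ i')]; rewrite eqxx.
under eq_bigr do rewrite tx_c.
rewrite [X in X - _](bigID (fun i' : 'I_D => (i' < i)%N)) /= addrAC subrr add0r.
rewrite (bigD1 i) ?ltnn //= big1 ?addr0.
  rewrite mulrAC mulfV ?mul1r //; apply: (@pcoef_true_neq0 R).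
  by rewrite -(diag_tri i); apply: PG_neq0_pcoef.
move=> i' /andP[]; rewrite -leqNgt => le_ii' ne_i'i.
have lt_ii' : (i < i')%N by rewrite ltn_neqAle le_ii' andbT eq_sym.
have := PG_neq0_pcoef ord0 (r i) (c i') g_supp.
by rewrite (negbTE (upper_tri lt_ii')) => /pcoef_false_neq0 ->; rewrite mul0r.
Qed.

Lemma msg_max_served k : served k -> (msg_max k).+1 = #|F|.
Proof. by rewrite /msg_max => ->; rewrite prednK // ltnW // card_finNzRing_gt1. Qed.

Lemma rx_output_correct w (g : coefs F K B 1) u k :
  PG R M g != 0 -> rx_output w (obs (tx_input u) g) u k = w k.
Proof.
move=> g_supp; rewrite ffunE /decode_msg; case: pickP => [i /eqP rik | not_r].
  subst k; rewrite ffunE sic_obs // subrK /field_of_nat index_uniq ?enum_uniq ?inord_val //.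
  by rewrite -cardE -(@msg_max_served (r i)) //; apply/existsP; exists i.
have msg_max0 : msg_max k = 0%N.
  by rewrite /msg_max /served; case: existsP => // -[i]; rewrite not_r.
apply: val_inj => /=; have := ltn_ord (w k); move: (nat_of_ord (w k)) => n.
by rewrite msg_max0 ltnS leqn0 => /eqP.
Qed.

Lemma scheme_box_err k : err M scheme_box k = 0.
Proof.
apply: big1 => w _; apply: big1 => g _; apply: big1 => x _; apply: big1 => wh _.
have [->|g_supp] := eqVneq (PG R M g) 0; first by rewrite mulr0 !mul0r.
rewrite -mulrA /scheme_box mulr_suml big1 ?mulr0 // => u _.
have [def_x|] := eqVneq x (tx_input u); last by rewrite /= mulr0 mul0r.
have [def_wh|] := eqVneq wh (rx_output w (obs x g) u); last by rewrite andbF mulr0 mul0r.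
by rewrite def_wh def_x rx_output_correct // eqxx mulr0.
Qed.

Lemma log2_msg_card k : log2 (msg_max k).+1%:R = (served k)%:R * log2 (#|F|%:R : R).
Proof.
have [served_k|] := boolP (served k); first by rewrite msg_max_served // mul1r.
by rewrite /msg_max => /negbTE ->; rewrite mul0r /log2 ln1 mul0r.
Qed.

Lemma sum_served : \sum_k ((served k)%:R : R) = D%:R.
Proof.
rewrite (big_inj_supp (h := r)) //; last first.
  move=> k k_notin_r; suff -> : served k = false by [].
  by apply/existsP => -[i /eqP rik]; move: k_notin_r; rewrite -rik codom_f.
rewrite (eq_bigr (fun _ => 1)) ?sumr_const ?card_ord // => i _.
by have -> : served (r i) by apply/existsP; exists i.
Qed.

Lemma served_rate_achievable :
  NS_achievable R F K B M (fun k => (served k)%:R * log2 (#|F|%:R : R)).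
Proof.
exists (fun _ => 1%N), (fun _ => msg_max), (fun _ => scheme_box).
split=> //; split=> //; first by move=> _; apply: scheme_box_NS.
split=> eps eps_gt0; exists 0%N => N _ k.
  by rewrite scheme_box_err ltW.
by rewrite divr1 log2_msg_card lerBlDr lerDl ltW.
Qed.

End TriangularScheme.

Lemma has_tri_achievable (R : realType) (K B D : nat) (M : 'M[bool]_(K, B)) :
  has_tri M D -> exists s : 'I_K -> bool,
    \sum_k ((s k)%:R : R) = D%:R /\
    forall F : finFieldType,
      NS_achievable R F K B M (fun k => (s k)%:R * log2 (#|F|%:R : R)).
Proof.
case/existsP => r /existsP[c /and4P[/injectiveP r_inj /injectiveP c_inj /forallP diag /forallP up]].
have upper (i j : 'I_D) : (i < j)%N -> ~~ M (r i) (c j) by apply/implyP/(forallP (up i)).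
exists (served r); split; first exact: sum_served.
by move=> F; apply: served_rate_achievable c_inj diag upper.
Qed.

Theorem theorem9 (R : realType) (K B : nat) (M : 'M[bool]_(K, B)) :
  (forall F : finFieldType,
     ((tri M)%:R * log2 (#|F|%:R : R))%:E <= CSigma_NS R F K B M)%E /\
  (((tri M)%:R : R)%:E <= dSigma_NS R M)%E.
Proof.
have [s [sum_s ach]] := has_tri_achievable R (has_tri_tri M).
split=> [F|].
  apply: ereal_sup_ubound; exists (fun k => (s k)%:R * log2 (#|F|%:R : R)).
    exact/closureK_sub/ach.
  by rewrite -mulr_suml sum_s.
apply: ereal_sup_ubound; exists (fun k => (s k)%:R); last by rewrite sum_s.
apply/closureK_sub; exists (fun (F : finFieldType) k => (s k)%:R * log2 (#|F|%:R : R)).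
split=> [|k eps eps_gt0]; first exact: ach.
exists 0%N => F _.
by rewrite mulfK ?(gt_eqF (log2_card_gt0 R F)) // lerBlDr lerDl ltW.
Qed.
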